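(* Let $\mathcal{D}\in\mathbb{C}^{\mathbf{N}(s)\times\mathbf{N}(s)}$ with $\mathrm{ind}(\mathcal{D})=k$ and let $\mathcal{B}\in\mathbb{C}^{\mathbf{N}(s)}$. Then the set of all solutions $\mathcal{Z}\in\mathbb{C}^{\mathbf{N}(s)}$ of the multilinear system $\mathcal{D}^k*_s\mathcal{Z}=\mathcal{D}^k*_s\mathcal{D}^\dagger*_s\mathcal{B}$ is exactly $\{\mathcal{D}^{c,\dagger}*_s\mathcal{B}+(\mathcal{I}-\mathcal{D}^{c,\dagger}*_s\mathcal{D})*_s\mathcal{Q}:\ \mathcal{Q}\in\mathbb{C}^{\mathbf{N}(s)}\}$.
   Context: For positive integers $N_1,\dots,N_s$ write $\mathbf{N}(s)=N_1\times\cdots\times N_s$. For $\mathcal{A}\in\mathbb{C}^{\mathbf{I}(m)\times\mathbf{K}(p)}$ and $\mathcal{B}\in\mathbb{C}^{\mathbf{K}(p)\times\mathbf{J}(n)}$ the Einstein product is the tensor $\mathcal{A}*_p\mathcal{B}\in\mathbb{C}^{\mathbf{I}(m)\times\mathbf{J}(n)}$ with entries $(\mathcal{A}*_p\mathcal{B})_{i_1\dots i_m j_1\dots j_n}=\sum_{k_1,\dots,k_p}\mathcal{A}_{i_1\dots i_m k_1\dots k_p}\mathcal{B}_{k_1\dots k_p j_1\dots j_n}$; the case $n=0$ (so $\mathcal{B}\in\mathbb{C}^{\mathbf{K}(p)}$) is allowed. For $\mathcal{D}\in\mathbb{C}^{\mathbf{N}(s)\times\mathbf{N}(s)}$, powers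 are $\mathcal{D}^0=\mathcal{I}$, $\mathcal{D}^{j+1}=\mathcal{D}*_s\mathcal{D}^j$, where $\mathcal{I}$ is the identity tensor with entries $\mathcal{I}_{i_1\dots i_s j_1\dots j_s}=\prod_{t=1}^s\delta_{i_tj_t}$. The conjugate transpose $\mathcal{A}^*$ of $\mathcal{A}\in\mathbb{C}^{\mathbf{M}(m)\times\mathbf{N}(n)}$ has entries $(\mathcal{A}^* )_{j_1\dots j_n i_1\dots i_m}=\overline{\mathcal{A}_{i_1\dots i_m j_1\dots j_n}}$. For $\mathcal{A}\in\mathbb{C}^{\mathbf{M}(m)\times\mathbf{N}(n)}$, $\mathscr{R}(\mathcal{A})=\{\mathcal{A}*_n\mathcal{E}:\mathcal{E}\in\mathbb{C}^{\mathbf{N}(n)}\}$. The index $\mathrm{ind}(\mathcal{D})$ of $\mathcal{D}\in\mathbb{C}^{\mathbf{N}(s)\times\mathbf{N}(s)}$ is the smallest nonnegative integer $k$ with $\dim\mathscr{R}(\mathcal{D}^k)=\dim\mathscr{R}(\mathcal{D}^{k+1})$. The Moore–Penrose inverse $\mathcal{D}^\dagger$ of $\mathcal{D}\in\mathbb{C}^{\mathbf{N}(s)\times\mathbf{N}(s)}$ is the unique $\mathcal{Y}$ with $\mathcal{D}*_s\mathcal{Y}*_s\mathcal{D}=\mathcal{D}$, $\mathcal{Y}*_s\mathcal{D}*_s\mathcal{Y}=\mathcal{Y}$, $(\mathcal{D}*_s\mathcal{Y})^*=\mathcal{D}*_s\mathcal{Y}$, $(\mathcal{Y}*_s\mathcal{D})^*=\mathcal{Y}*_s\mathcal{D}$.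 With $k=\mathrm{ind}(\mathcal{D})$, the Drazin inverse $\mathcal{D}^{\mathrm D}$ is the unique $\mathcal{Y}$ with $\mathcal{Y}*_s\mathcal{D}^{k+1}=\mathcal{D}^k$, $\mathcal{Y}*_s\mathcal{D}*_s\mathcal{Y}=\mathcal{Y}$, $\mathcal{D}*_s\mathcal{Y}=\mathcal{Y}*_s\mathcal{D}$. The CMP inverse is $\mathcal{D}^{c,\dagger}=\mathcal{D}^\dagger*_s\mathcal{D}*_s\mathcal{D}^{\mathrm D}*_s\mathcal{D}*_s\mathcal{D}^\dagger$. *)

(* Tensors over an algebraically closed numeric field C
   (e.g. the complex numbers) with conjugation Num.conj. *)
From HB Require Import structures.
From mathcomp Require Import all_boot all_order all_algebra.
Set Implicit Arguments. Unset Strict Implicit. Unset Printing Implicit Defensive.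
Import Order.TTheory GRing.Theory Num.Theory.
Local Open Scope ring_scope.

(* Multi-index set N(s) = N_1 x ... x N_s, as a finite type of tuples
   (i_1,...,i_s) with i_t < N_t. *)
Definition Ix (s : nat) (N : 'I_s -> nat) : finType :=
  {dffun forall t : 'I_s, 'I_(N t)}.

Section Tensors.
Variable C : numClosedFieldType.

(* An order-(m+n) tensor in C^{I(m) x J(n)} is a function I -> J -> C;
   an order-p tensor in C^{K(p)} is a function K -> C. *)
Definition tensor (I J : finType) := I -> J -> C.
Definition vtensor (I : finType) := I -> C.

Definition eprod (I K J : finType) (A : tensor I K) (B : tensor K J) : tensor I J :=
  fun i j => \sum_(k : K) A i k * B k j.

Definition eprodv (I K : finType) (A : tensor I K) (B : vtensor K) : vtensor I :=
  fun i => \sum_(k : K) A i k * B k.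

(* Identity tensor: I_{i j} = prod_t delta_{i_t j_t}, i.e. 1 iff i = j. *)
Definition eid (I : finType) : tensor I I := fun i j => (i == j)%:R.

Definition esub (I J : finType) (A B : tensor I J) : tensor I J :=
  fun i j => A i j - B i j.

Definition vadd (I : finType) (x y : vtensor I) : vtensor I := fun i => x i + y i.

Definition ctrans (I J : finType) (A : tensor I J) : tensor J I :=
  fun j i => (A i j)^*.

Fixpoint epow (I : finType) (D : tensor I I) (j : nat) : tensor I I :=
  match j with
  | 0 => @eid I
  | j.+1 => eprod D (epow D j)
  end.

(* dim R(A) for A in C^{I x J}: R(A) = { A * E : E in C^J } is the span of
   the "columns" (A i j)_i, j in J; its dimension is the rank of the matrix
   whose rows are these columns. *)
Definition range_dim (I J : finType) (A : tensor I J) : nat :=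
  \rank (\matrix_(j < #|J|, i < #|I|) A (enum_val i) (enum_val j)).

Definition is_index (I : finType) (D : tensor I I) (k : nat) : Prop :=
  range_dim (epow D k) = range_dim (epow D k.+1) /\
  forall j, (j < k)%N -> range_dim (epow D j) <> range_dim (epow D j.+1).

Definition is_MP (I : finType) (D Y : tensor I I) : Prop :=
  [/\ eprod (eprod D Y) D = D, eprod (eprod Y D) Y = Y,
      ctrans (eprod D Y) = eprod D Y & ctrans (eprod Y D) = eprod Y D].

Definition is_Drazin (I : finType) (D Y : tensor I I) (k : nat) : Prop :=
  [/\ eprod Y (epow D k.+1) = epow D k, eprod (eprod Y D) Y = Y
      & eprod D Y = eprod Y D].

Definition cmp_inv (I : finType) (Dd DD D : tensor I I) : tensor I I :=
  eprod (eprod (eprod (eprod Dd D) DD) D) Dd.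

End Tensors.

From mathcomp Require Import all_boot all_order all_algebra.
From Stdlib Require Import FunctionalExtensionality.
Set Implicit Arguments. Unset Strict Implicit. Unset Printing Implicit Defensive.
Import Order.TTheory GRing.Theory Num.Theory.
Local Open Scope ring_scope.

(* With A := D^k, the tensor U := D^† D (D^D)^(k+1) D is an inner inverse of A
   (A U A = A), the CMP inverse factors as U A D^†, and D^{c,†} D = U A.  The
   system is then A Z = A (D^† B), whose solutions are classically
   U A (D^† B) + (I - U A) Q. *)

Section EinsteinProduct.
Variable C : numClosedFieldType.

Lemma eprodA (I J K L : finType) (A : tensor C I J) (B : tensor C J K)
    (E : tensor C K L) :
  eprod (eprod A B) E = eprod A (eprod B E).
Proof.
apply: functional_extensionality => i; apply: functional_extensionality => j.
rewrite /eprod; under eq_bigr => k _ do rewrite big_distrl.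
rewrite exchange_big; apply: eq_bigr => l _.
rewrite big_distrr; apply: eq_bigr => k _ /=; by rewrite mulrA.
Qed.

Lemma eprodvA (I J K : finType) (A : tensor C I J) (B : tensor C J K)
    (v : vtensor C K) :
  eprodv (eprod A B) v = eprodv A (eprodv B v).
Proof.
apply: functional_extensionality => i.
rewrite /eprodv /eprod; under eq_bigr => k _ do rewrite big_distrl.
rewrite exchange_big; apply: eq_bigr => l _.
rewrite big_distrr; apply: eq_bigr => k _ /=; by rewrite mulrA.
Qed.

Lemma eprod1l (I J : finType) (A : tensor C I J) : eprod (@eid C I) A = A.
Proof.
apply: functional_extensionality => i; apply: functional_extensionality => j.
rewrite /eprod /eid (bigD1 i) //= eqxx mul1r big1 ?addr0 // => k.
by rewrite eq_sym => /negbTE ->; rewrite mul0r.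
Qed.

Lemma eprod1r (I J : finType) (A : tensor C I J) : eprod A (@eid C J) = A.
Proof.
apply: functional_extensionality => i; apply: functional_extensionality => j.
rewrite /eprod /eid (bigD1 j) //= eqxx mulr1 big1 ?addr0 // => k.
by move=> /negbTE ->; rewrite mulr0.
Qed.

Lemma eprodv1 (I : finType) (v : vtensor C I) : eprodv (@eid C I) v = v.
Proof.
apply: functional_extensionality => i.
rewrite /eprodv /eid (bigD1 i) //= eqxx mul1r big1 ?addr0 // => k.
by rewrite eq_sym => /negbTE ->; rewrite mul0r.
Qed.

Lemma eprodvD (I J : finType) (A : tensor C I J) (x y : vtensor C J) :
  eprodv A (vadd x y) = vadd (eprodv A x) (eprodv A y).
Proof.
apply: functional_extensionality => i.
by rewrite /eprodv /vadd -big_split; apply: eq_bigr => k _; rewrite mulrDr.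
Qed.

Lemma eprodvB (I J : finType) (A : tensor C I J) (x y : vtensor C J) :
  eprodv A (fun j => x j - y j) = fun i => eprodv A x i - eprodv A y i.
Proof.
apply: functional_extensionality => i.
by rewrite /eprodv -sumrB; apply: eq_bigr => k _; rewrite mulrBr.
Qed.

Lemma eprodv_esub (I J : finType) (A B : tensor C I J) (v : vtensor C J) :
  eprodv (esub A B) v = fun i => eprodv A v i - eprodv B v i.
Proof.
apply: functional_extensionality => i.
by rewrite /eprodv /esub -sumrB; apply: eq_bigr => k _; rewrite mulrBl.
Qed.

Lemma epowSr (I : finType) (D : tensor C I I) j :
  epow D j.+1 = eprod (epow D j) D.
Proof.
elim: j => [|j IH]; first by rewrite /= eprod1r eprod1l.
by rewrite -[epow D j.+2]/(eprod D (epow D j.+1)) [in LHS]IH -eprodA.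
Qed.

Lemma epow_comm (I : finType) (A B : tensor C I I) j :
  eprod A B = eprod B A -> eprod A (epow B j) = eprod (epow B j) A.
Proof.
move=> AB; elim: j => [|j IH] /=; first by rewrite eprod1r eprod1l.
by rewrite -eprodA AB eprodA IH -eprodA.
Qed.

Lemma inner_inverse_solutions (I J : finType) (A : tensor C I J)
    (U : tensor C J I) (w z : vtensor C J) :
  eprod (eprod A U) A = A ->
  eprodv A z = eprodv A w <->
  exists q, z = vadd (eprodv U (eprodv A w))
                     (eprodv (esub (@eid C J) (eprod U A)) q).
Proof.
move=> AUA; split=> [Az | [q ->]].
  exists z; apply: functional_extensionality => j.
  by rewrite eprodv_esub eprodv1 eprodvA Az /vadd addrC subrK.
rewrite eprodvD eprodv_esub eprodvB eprodv1 -!eprodvA AUA -eprodA AUA.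
by apply: functional_extensionality => i; rewrite /vadd subrr addr0.
Qed.

Section CMPInverse.
Variables (I : finType) (D Dd DD : tensor C I I) (k : nat).
Hypothesis MP_inner : eprod (eprod D Dd) D = D.
Hypothesis Drazin_pow : eprod DD (epow D k.+1) = epow D k.
Hypothesis Drazin_outer : eprod (eprod DD D) DD = DD.
Hypothesis Drazin_comm : eprod D DD = eprod DD D.

Lemma Drazin_pow_mul j : eprod (epow DD j.+1) (epow D j.+1) = eprod DD D.
Proof.
elim: j => [|j IH]; first by rewrite /= !eprod1r.
have DD2D : eprod DD (eprod DD D) = DD by rewrite -Drazin_comm -eprodA.
rewrite [epow D _]epowSr -[epow DD j.+2]/(eprod DD (epow DD j.+1)).
by rewrite eprodA -(eprodA _ _ D) IH -eprodA DD2D.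
Qed.

Lemma pow_mul_Drazin : eprod (epow D k) (eprod DD D) = epow D k.
Proof.
by rewrite -eprodA -(epow_comm _ (esym Drazin_comm)) eprodA -epowSr.
Qed.

Lemma pow_mul_MP : eprod (epow D k) (eprod Dd D) = epow D k.
Proof.
by rewrite -{1}pow_mul_Drazin !eprodA -(eprodA D Dd D) MP_inner pow_mul_Drazin.
Qed.

Local Notation U := (eprod (eprod Dd D) (eprod (epow DD k.+1) D)).

Lemma pow_inner_inverse : eprod (eprod (epow D k) U) (epow D k) = epow D k.
Proof.
rewrite eprodA (eprodA (eprod Dd D)) (eprodA (epow DD k.+1) D).
by rewrite (Drazin_pow_mul k) -eprodA pow_mul_MP pow_mul_Drazin.
Qed.

Lemma cmp_inv_factor : cmp_inv Dd DD D = eprod (eprod U (epow D k)) Dd.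
Proof.
rewrite /cmp_inv (eprodA (eprod Dd D) DD D) -(Drazin_pow_mul k).
by rewrite -[epow D k.+1]/(eprod D (epow D k)) !eprodA.
Qed.

Lemma cmp_inv_mulD : eprod (cmp_inv Dd DD D) D = eprod U (epow D k).
Proof. by rewrite cmp_inv_factor eprodA eprodA pow_mul_MP. Qed.

End CMPInverse.
End EinsteinProduct.

Theorem mainTheorem13 (C : numClosedFieldType) (s : nat) (N : 'I_s -> nat)
  (HN : forall t, (0 < N t)%N)
  (D : tensor C (Ix N) (Ix N)) (k : nat) (Hk : is_index D k)
  (Dd : tensor C (Ix N) (Ix N)) (HDd : is_MP D Dd)
  (DD : tensor C (Ix N) (Ix N)) (HDD : is_Drazin D DD k)
  (B : vtensor C (Ix N)) :
  forall Z : vtensor C (Ix N),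
    eprodv (epow D k) Z = eprodv (eprod (epow D k) Dd) B <->
    exists Q : vtensor C (Ix N),
      Z = vadd (eprodv (cmp_inv Dd DD D) B)
               (eprodv (esub (@eid C (Ix N)) (eprod (cmp_inv Dd DD D) D)) Q).
Proof.
move=> Z; case: HDd => MP_inner _ _ _.
case: HDD => Drazin_pow Drazin_outer Drazin_comm.
rewrite (cmp_inv_mulD MP_inner Drazin_pow Drazin_outer Drazin_comm).
rewrite (cmp_inv_factor Dd k Drazin_outer Drazin_comm).
rewrite !(eprodvA _ Dd) (eprodvA _ (epow D k)).
by apply: inner_inverse_solutions; apply: pow_inner_inverse.
Qed.
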